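(* Let $0<\beta<1$, $p=\lceil\beta^{-1}\rceil-1$, and let $t$ be an integer with $2\le t\le p$. Let $G$ be a graph of order $n$ with minimum degree $(1-\beta)n$. Then $$\sum_{S\in\mathcal{K}_{t+1}}\widetilde D(S)\le\big(t-1+(p-2t+2)(t+1)\beta\big)k_{t+1}+(t-1)\sum_{S\in\mathcal{K}_{t+1}}D_+(S)-(1-t\beta)(p-t+1)\beta n k_t-(t-1)(t+2)\frac{k_{t+2}}{n}-(1-t\beta)n\sum_{T\in\mathcal{K}_t}D_+(T).$$ Moreover, equality holds if and only if for each $T\in\mathcal{K}_t$, either $D_-(T)=1-t\beta$ or $D_-(T)=(p-t+1)\beta$.
   Context: All graphs are finite and simple. For a graph $G$, $\mathcal{K}_t$ denotes the set of $t$-cliques of $G$ (identified with their vertex sets) and $k_t=|\mathcal{K}_t|$; for a clique $S$, $\mathcal{K}_t(S)$ is the set of $t$-cliques contained in $S$. The degree $d(T)$ of a $t$-clique $T$ is the number of $(t+1)$-cliques containing $T$, and $D(T)=d(T)/n$. For $0<\beta<1$ with $p=\lceil\beta^{-1}\rceil-1$, and $T\in\mathcal{K}_t$ with $1\le t\le p+1$, define $D_-(T)=\min\{D(T),(p-t+1)\beta\}$ and $D_+(T)=D(T)-D_-(T)$. For $2\le t\le p$ and $S\in\mathcal{K}_{t+1}$, define $\widetilde D(S)=\sum_{T\in\mathcal{K}_t(S)}D_-(T)-\big(2-(t+1)\beta+(t-1)D_-(S)\big)$. *)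

From HB Require Import structures.
From mathcomp Require Import all_boot all_order all_algebra.
Set Implicit Arguments. Unset Strict Implicit. Unset Printing Implicit Defensive.
Import Order.TTheory GRing.Theory Num.Theory.
Local Open Scope ring_scope.

Section CliqueDefs.
Variables (V : finType) (e : rel V).

Definition is_clique (S : {set V}) : bool :=
  [forall x in S, forall y in S, (x != y) ==> e x y].

Definition cliques (t : nat) : {set {set V}} :=
  [set S : {set V} | is_clique S && (#|S| == t)].

Definition kcount (t : nat) : nat := #|cliques t|.

Definition vdeg (v : V) : nat := #|[set w | e v w]|.

Definition cdeg (S : {set V}) : nat :=
  #|[set S' in cliques #|S|.+1 | S \subset S']|.

Variable R : archiRealFieldType.
Variables (beta : R) (p : nat).

Definition Dn (S : {set V}) : R := (cdeg S)%:R / #|V|%:R.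

(* D_-(T) = min{D(T), (p - t + 1) beta}, t = |T| (used for 1 <= t <= p+1) *)
Definition Dminus (S : {set V}) : R :=
  Num.min (Dn S) ((p.+1 - #|S|)%N%:R * beta).

Definition Dplus (S : {set V}) : R := Dn S - Dminus S.

Definition Dtilde (t : nat) (S : {set V}) : R :=
  \sum_(T in cliques t | T \subset S) Dminus T
  - (2 - (t.+1)%:R * beta + (t%:R - 1) * Dminus S).

End CliqueDefs.

(** Write a := 1 - t beta and b := (p - t + 1) beta.  The minimum degree
    condition forces D(T) >= a for every t-clique T, and the choice of p
    gives a <= b, so a <= D_-(T) <= b.  Double counting the pairs T in S of
    cliques turns the left-hand side into a sum of terms d(T) D_-(T), and
    since D_+(T) is nonzero only when D_-(T) = b, one gets the identity
      LHS = RHS - n * sum_T (D_-(T) - a) (b - D_-(T)),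
    whose last sum has nonnegative terms, all zero exactly when every
    D_-(T) is a or b. *)

From HB Require Import structures.
From mathcomp Require Import all_boot all_order all_algebra.
From mathcomp Require Import ring lra.
Import Order.TTheory GRing.Theory Num.Theory.
Set Implicit Arguments. Unset Strict Implicit. Unset Printing Implicit Defensive.

Section Cliques.
Variables (V : finType) (e : rel V).

Lemma is_clique_sub (S T : {set V}) :
  is_clique e S -> T \subset S -> is_clique e T.
Proof.
move=> /forallP cS sTS; apply/forallP=> x; apply/implyP=> xT.
apply/forallP=> y; apply/implyP=> yT.
have:= cS x; rewrite (subsetP sTS x xT) /= => /forallP/(_ y).
by rewrite (subsetP sTS y yT).
Qed.

Lemma card_subcliques k (S : {set V}) : S \in cliques e k.+1 ->
  #|[set T in cliques e k | T \subset S]| = k.+1.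
Proof.
rewrite inE => /andP[cS /eqP cardS].
rewrite -[RHS]binSn -cardS -cards_draws; apply: eq_card => T; rewrite !inE.
case sTS: (T \subset S); rewrite ?andbF ?andbT //=.
by rewrite (is_clique_sub cS sTS).
Qed.

Definition common_nbhd (T : {set V}) : {set V} := [set w | [forall v in T, e v w]].

Lemma card_compl_common_nbhd (T : {set V}) :
  (#|~: common_nbhd T| <= \sum_(v in T) #|~: [set w | e v w]|)%N.
Proof.
rewrite -sum1_card.
apply: (@leq_trans (\sum_(w in ~: common_nbhd T) \sum_(v in T) (~~ e v w : nat))).
  apply: leq_sum => w; rewrite !inE => /forallPn[v].
  by rewrite negb_imply => /andP[vT nev]; rewrite (bigD1 v) //= nev.
apply: (@leq_trans (\sum_(w : V) \sum_(v in T) (~~ e v w : nat))).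
  by rewrite [X in (_ <= X)%N](bigID (mem (~: common_nbhd T))) /= leq_addr.
rewrite exchange_big /=; apply: leq_sum => v _.
rewrite -sum1_card [X in (_ <= X)%N]big_mkcond /=; apply: leq_sum => w _.
by rewrite !inE; case: (e v w).
Qed.

Hypotheses (e_sym : symmetric e) (e_irr : irreflexive e).

(* Each common neighbour w of the clique T extends it to the clique w |: T. *)
Lemma card_common_nbhd_le_cdeg k (T : {set V}) :
  T \in cliques e k -> (#|common_nbhd T| <= cdeg e T)%N.
Proof.
rewrite inE => /andP[cT /eqP cardT].
have notinT w : w \in common_nbhd T -> w \notin T.
  rewrite inE => /forallP/(_ w) ewT; apply/negP => wT.
  by move: ewT; rewrite wT /= e_irr.
rewrite /cdeg -(@card_in_imset _ _ (fun w => w |: T) (mem (common_nbhd T))); last first.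
  move=> w1 w2 w1N w2N /= eqw.
  have : w1 \in w2 |: T by rewrite -eqw setU11.
  by rewrite in_setU1 (negbTE (notinT w1 w1N)) orbF => /eqP.
apply: subset_leq_card; apply/subsetP => _ /imsetP[w wN ->].
rewrite !inE subsetUr andbT cardsU1 (notinT w wN) cardT eqxx andbT.
move: wN; rewrite inE => /forallP wN.
apply/forallP=> x; apply/implyP; rewrite in_setU1 => xU.
apply/forallP=> y; apply/implyP; rewrite in_setU1 => yU.
case/orP: xU => [/eqP -> | xT]; case/orP: yU => [/eqP -> | yT].
- by rewrite eqxx.
- by rewrite e_sym; move: (wN y); rewrite yT /= => ->; rewrite implybT.
- by move: (wN x); rewrite xT /= => ->; rewrite implybT.
- by move/forallP: cT => /(_ x); rewrite xT => /forallP/(_ y); rewrite yT.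
Qed.

End Cliques.

Local Open Scope ring_scope.

Section Counting.
Variables (R : pzSemiRingType) (V : finType) (e : rel V).

Lemma sum_subcliques k (f : {set V} -> R) :
  \sum_(S in cliques e k.+1) \sum_(T in cliques e k | T \subset S) f T
  = \sum_(T in cliques e k) (cdeg e T)%:R * f T.
Proof.
under eq_bigr => S _ do rewrite big_mkcondr.
rewrite exchange_big /=; apply: eq_bigr => T Tk.
move: Tk; rewrite inE => /andP[_ /eqP cardT].
rewrite -big_mkcondr /cdeg cardT mulr_natl -sumr_const.
by apply: eq_bigl => S; rewrite inE.
Qed.

Lemma sum_cdeg k :
  \sum_(T in cliques e k) (cdeg e T)%:R = (k.+1 * kcount e k.+1)%:R :> R.
Proof.
have inner S : S \in cliques e k.+1 ->
    \sum_(T in cliques e k | T \subset S) (1 : R) = k.+1%:R.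
  move=> Sk; rewrite -(card_subcliques Sk) -sumr_const.
  by apply: eq_bigl => T; rewrite inE.
rewrite -(eq_bigr _ (fun T _ => mulr1 _)) -sum_subcliques (eq_bigr _ inner).
by rewrite sumr_const natrM mulr_natr.
Qed.

End Counting.

Lemma cdeg_ge_mindeg (R : realFieldType) (V : finType) (e : rel V) (beta : R) (T : {set V}) :
  symmetric e -> irreflexive e ->
  (forall v, (1 - beta) * #|V|%:R <= (vdeg e v)%:R) ->
  T \in cliques e #|T| ->
  (1 - #|T|%:R * beta) * #|V|%:R <= (cdeg e T)%:R.
Proof.
move=> e_sym e_irr hmin Tk; set n : R := #|V|%:R.
have nbhdT : (#|common_nbhd e T|%:R : R) <= (cdeg e T)%:R.
  by rewrite ler_nat (card_common_nbhd_le_cdeg e_sym e_irr Tk).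
have complT : (#|~: common_nbhd e T|%:R : R)
              <= \sum_(v in T) (n - (vdeg e v)%:R).
  rewrite (le_trans (_ : _ <= (\sum_(v in T) #|~: [set w | e v w]|)%:R)) //.
    by rewrite ler_nat card_compl_common_nbhd.
  rewrite natr_sum ler_sum // => v _.
  by rewrite /n -(cardsC [set w | e v w]) natrD /vdeg; lra.
have nonnbrs : \sum_(v in T) (n - (vdeg e v)%:R) <= #|T|%:R * beta * n.
  rewrite -mulrA mulr_natl -sumr_const ler_sum // => v _.
  by have := hmin v; lra.
have splitn : n = #|common_nbhd e T|%:R + #|~: common_nbhd e T|%:R.
  by rewrite /n -natrD cardsC.
lra.
Qed.

Section DegreeSplit.
Variables (R : archiRealFieldType) (V : finType) (e : rel V).
Variables (beta : R) (p : nat).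

(* D_+(S) vanishes unless D_-(S) attains its cap. *)
Lemma Dplus_mul_Dminus (S : {set V}) :
  Dplus e beta p S * Dminus e beta p S
  = (p.+1 - #|S|)%N%:R * beta * Dplus e beta p S.
Proof.
rewrite /Dplus /Dminus.
by have [_|_] := leP (Dn e R S) ((p.+1 - #|S|)%N%:R * beta);
  rewrite ?subrr ?mul0r ?mulr0 // mulrC.
Qed.

Lemma Dminus_Dn_Dplus (S : {set V}) :
  Dminus e beta p S = Dn e R S - Dplus e beta p S.
Proof. by rewrite /Dplus opprB addrC subrK. Qed.

Lemma cap_cliques t (T : {set V}) : T \in cliques e t -> (t <= p)%N ->
  (p.+1 - #|T|)%N%:R * beta = (p%:R - t%:R + 1) * beta.
Proof.
rewrite inE => /andP[_ /eqP ->] tp.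
by rewrite natrB ?(leqW tp) // -[p.+1]addn1 natrD addrAC.
Qed.

Lemma one_le_pS_beta : 0 < beta -> p%:Z = Num.ceil (beta^-1) - 1 ->
  1 <= (p%:R + 1) * beta.
Proof.
move=> beta_gt0 hp.
have hceil : Num.ceil (beta^-1) = p%:Z + 1 by rewrite hp subrK.
have := ceil_ge (beta^-1); rewrite hceil intrD => h.
by rewrite -(ler_pM2r beta_gt0) mulVf ?gt_eqF in h.
Qed.

Lemma Dminus_cliques_bounds t (T : {set V}) :
  symmetric e -> irreflexive e -> 0 < beta ->
  p%:Z = Num.ceil (beta^-1) - 1 -> (0 < #|V|)%N ->
  (forall v, (1 - beta) * #|V|%:R <= (vdeg e v)%:R) ->
  T \in cliques e t -> (t <= p)%N ->
  1 - t%:R * beta <= Dminus e beta p T <= (p%:R - t%:R + 1) * beta.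
Proof.
move=> e_sym e_irr beta_gt0 hp V_gt0 hmin Tk tp.
have cardT : #|T| = t by move: Tk; rewrite inE => /andP[_ /eqP].
have le_a_Dn : 1 - t%:R * beta <= Dn e R T.
  rewrite /Dn ler_pdivlMr ?ltr0n // -cardT.
  by apply: cdeg_ge_mindeg; rewrite // cardT.
have le_a_b : 1 - t%:R * beta <= (p%:R - t%:R + 1) * beta.
  by have := one_le_pS_beta beta_gt0 hp; lra.
by rewrite /Dminus (cap_cliques Tk tp) le_min ge_min lexx orbT le_a_Dn le_a_b.
Qed.

End DegreeSplit.

Section Identity.
Variables (R : archiRealFieldType) (V : finType) (e : rel V).
Variables (beta : R) (p t : nat).

Let n : R := #|V|%:R.
Let a : R := 1 - t%:R * beta.
Let b : R := (p%:R - t%:R + 1) * beta.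
Let Dm := Dminus e beta p.
Let Dp := Dplus e beta p.

Lemma sum_Dtilde_gap : n != 0 -> (t <= p)%N ->
  \sum_(S in cliques e t.+1) Dtilde e beta p t S =
    (t%:R - 1 + (p%:R - 2 * t%:R + 2) * t.+1%:R * beta) * (kcount e t.+1)%:R
    + (t%:R - 1) * \sum_(S in cliques e t.+1) Dp S
    - a * (p%:R - t%:R + 1) * beta * n * (kcount e t)%:R
    - (t%:R - 1) * (t%:R + 2) * ((kcount e t.+2)%:R / n)
    - a * n * \sum_(T in cliques e t) Dp T
    - n * \sum_(T in cliques e t) (Dm T - a) * (b - Dm T).
Proof.
move=> n0 tp.
have per_clique T : T \in cliques e t -> (cdeg e T)%:R * Dm T =
    - (n * ((Dm T - a) * (b - Dm T))) + (a + b) * (cdeg e T)%:R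
    - n * a * Dp T - n * a * b.
  move=> Tk; have := Dplus_mul_Dminus e beta p T.
  rewrite (cap_cliques beta Tk tp) -/b -/Dm -/Dp => hcap.
  have cdegE : (cdeg e T)%:R = n * (Dm T + Dp T).
    by rewrite /Dm Dminus_Dn_Dplus subrK /Dn mulrC divfK.
  apply/eqP; rewrite -subr_eq0 cdegE; apply/eqP.
  transitivity (n * (Dp T * Dm T - b * Dp T)); first by ring.
  by rewrite hcap subrr mulr0.
have sum_cliques_t : \sum_(T in cliques e t) (cdeg e T)%:R * Dm T =
    - (n * \sum_(T in cliques e t) (Dm T - a) * (b - Dm T))
    + (a + b) * (t.+1 * kcount e t.+1)%:R
    - n * a * \sum_(T in cliques e t) Dp T - n * a * b * (kcount e t)%:R.
  rewrite (eq_bigr _ per_clique) 2!sumrB big_split /= sumrN sumr_const.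
  by rewrite -!mulr_sumr sum_cdeg !mulr_natr.
have sum_cliques_tS : \sum_(S in cliques e t.+1) Dm S =
    (t.+2 * kcount e t.+2)%:R / n - \sum_(S in cliques e t.+1) Dp S.
  rewrite (eq_bigr _ (fun S _ => Dminus_Dn_Dplus e beta p S)) sumrB.
  by rewrite /Dn -mulr_suml sum_cdeg.
rewrite /Dtilde sumrB big_split /= sum_subcliques -/Dm sumr_const -mulr_sumr.
rewrite sum_cliques_t sum_cliques_tS /a /b /kcount !natrM -!natr1 mulr_natr.
by field.
Qed.

End Identity.

Unset Implicit Arguments.

Theorem mainTheorem12 (R : archiRealFieldType) (beta : R) (p t : nat)
  (V : finType) (e : rel V)
  (e_sym : symmetric e) (e_irr : irreflexive e)
  (hbeta0 : 0 < beta) (hbeta1 : beta < 1)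
  (hp : (p%:Z = Num.ceil (beta^-1) - 1)%R)
  (ht2 : (2 <= t)%N) (htp : (t <= p)%N)
  (hmin_ge : forall v : V, (1 - beta) * #|V|%:R <= (vdeg e v)%:R)
  (hmin_eq : exists v : V, (vdeg e v)%:R = (1 - beta) * #|V|%:R) :
  let n : R := #|V|%:R in
  let LHS := \sum_(S in cliques e t.+1) Dtilde e beta p t S in
  let RHS :=
    (t%:R - 1 + (p%:R - 2 * t%:R + 2) * t.+1%:R * beta) * (kcount e t.+1)%:R
    + (t%:R - 1) * \sum_(S in cliques e t.+1) Dplus e beta p S
    - (1 - t%:R * beta) * (p%:R - t%:R + 1) * beta * n * (kcount e t)%:R
    - (t%:R - 1) * (t%:R + 2) * ((kcount e t.+2)%:R / n)
    - (1 - t%:R * beta) * n * \sum_(T in cliques e t) Dplus e beta p T in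
  LHS <= RHS /\
  (LHS = RHS <->
   (forall T, T \in cliques e t ->
      Dminus e beta p T = 1 - t%:R * beta \/
      Dminus e beta p T = (p%:R - t%:R + 1) * beta)).
Proof.
move=> n LHS RHS; set a := 1 - t%:R * beta; set b := (p%:R - t%:R + 1) * beta.
pose Q T := (Dminus e beta p T - a) * (b - Dminus e beta p T).
have V_gt0 : (0 < #|V|)%N by case: hmin_eq => v _; apply/card_gt0P; exists v.
have n_gt0 : 0 < n by rewrite ltr0n.
have gap : LHS = RHS - n * \sum_(T in cliques e t) Q T.
  exact: sum_Dtilde_gap (lt0r_neq0 n_gt0) htp.
have Q_ge0 T : T \in cliques e t -> 0 <= Q T.
  move=> Tk; have /andP[aD Db] :=
    Dminus_cliques_bounds e_sym e_irr hbeta0 hp V_gt0 hmin_ge Tk htp.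
  by rewrite mulr_ge0 // subr_ge0.
rewrite gap; split.
  by rewrite gerBl mulr_ge0 ?sumr_ge0 ?ltW.
have gap_eq0 : RHS - n * \sum_(T in cliques e t) Q T = RHS
                <-> \sum_(T in cliques e t) Q T = 0.
  split=> [gap0 | ->]; last by rewrite mulr0 subr0.
  by apply: (mulfI (lt0r_neq0 n_gt0)); rewrite mulr0; lra.
rewrite gap_eq0; split=> [Q0 T Tk | ab].
  move/eqP: (psumr_eq0P Q_ge0 Q0 Tk); rewrite mulf_eq0 !subr_eq0.
  by case/orP=> /eqP Dm; [left | right].
by apply: big1 => T /ab [] Dm; rewrite /Q Dm subrr ?mul0r ?mulr0.
Qed.
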